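(* With the notation of the context, let $\bm c$ be an integer vector and $\bm p\in\mathbb{Z}_\omega^{2n}$ a profile. There exists a sequence compatible with $\bm p$ for $\bm c$ if and only if there are integer vectors $\bm a_0,\bm a$ with $\bm a\neq\bm 0$ such that: (1) for every $i$ with $p_{2i-1}\in\mathbb{Z}$: $\bm r_i^\top\bm a_0\le p_{2i-1}$ and $\bm r_i^\top\bm a\le 0$; (2) for every $i$ with $p_{2i}\in\mathbb{Z}$: $p_{2i}\le\bm s_i^\top\bm a_0+\bm t_i^\top\bm c+h_i$ and $\bm s_i^\top\bm a\ge0$; (3) for every $i$ with $p_{2i}=\omega$: $\bm s_i^\top\bm a>0$; (4) for every $j\in[1,m]$: $\bm u_j^\top\bm a_0\approx^j_{e_j}\bm v_j^\top(\bm a_0+\bm a)+\bm w_j^\top\bm c+d_j$, $\bm u_j^\top\bm a\equiv_{e_j}0$ and $\bm v_j^\top\bm a\equiv_{e_j}0$.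
   Context: Fixed data: integer vectors $\bm r_i,\bm s_i,\bm t_i$ and $h_i\in\mathbb{Z}$ for $i\in[1,n]$; integer vectors $\bm u_j,\bm v_j,\bm w_j$, $d_j\in\mathbb{Z}$, $e_j>0$ and relations $\approx^j_{e_j}\in\{\equiv_{e_j},\not\equiv_{e_j}\}$ for $j\in[1,m]$ ($s\equiv_e t$ means $e\mid s-t$). $\mathbb{Z}_\omega=\mathbb{Z}\cup\{\omega\}$, $\omega$ above all integers. A profile is $\bm p=(p_1,\dots,p_{2n})\in\mathbb{Z}_\omega^{2n}$. A sequence of pairwise distinct integer vectors $\bm a_1,\bm a_2,\dots$ is compatible with $\bm p$ for $\bm c$ if for all $k<\ell$ and $j$, $\bm u_j^\top\bm a_k\approx^j_{e_j}\bm v_j^\top\bm a_\ell+\bm w_j^\top\bm c+d_j$, and for all $i$, $\sup_k\bm r_i^\top\bm a_k\le p_{2i-1}$ and $p_{2i}\le\liminf_k(\bm s_i^\top\bm a_k+\bm t_i^\top\bm c+h_i)$ (value $+\infty$ identified with $\omega$). *)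

From HB Require Import structures.
From mathcomp Require Import all_boot all_order all_algebra.
Set Implicit Arguments. Unset Strict Implicit. Unset Printing Implicit Defensive.
Import Order.TTheory GRing.Theory Num.Theory.
Local Open Scope ring_scope.

Definition dotv (k : nat) (x y : 'rV[int]_k) : int := \sum_(q < k) x 0 q * y 0 q.

Definition congr_e (e s t : int) : Prop := (e %| s - t)%Z.

Definition approx (b : bool) (e s t : int) : Prop :=
  if b then congr_e e s t else ~ congr_e e s t.

(* Z_omega = option int, with None = omega. A profile is a (2n)-tuple. *)
(* 0-indexed: p_{2i-1} (paper, i in [1,n]) is entry 2i' and p_{2i} is
   entry 2i'+1, where i' = i - 1 : 'I_n. *)
Definition p_odd (n : nat) (p : (2 * n).-tuple (option int)) (i : 'I_n) :=
  nth None p (2 * i)%N.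
Definition p_even (n : nat) (p : (2 * n).-tuple (option int)) (i : 'I_n) :=
  nth None p (2 * i).+1.

(* sup_k x_k <= p, for p in Z_omega (sup = +oo identified with omega). *)
Definition sup_le (x : nat -> int) (p : option int) : Prop :=
  match p with
  | Some z => forall k, x k <= z
  | None => True
  end.

(* p <= liminf_k x_k, for p in Z_omega, x integer-valued
   (liminf = +oo identified with omega). *)
Definition le_liminf (p : option int) (x : nat -> int) : Prop :=
  match p with
  | Some z => exists N, forall k, (N <= k)%N -> z <= x k
  | None => forall M : int, exists N, forall k, (N <= k)%N -> M <= x k
  end.

Definition compatible (d l n m : nat)
    (r s : 'I_n -> 'rV[int]_d) (t : 'I_n -> 'rV[int]_l) (h : 'I_n -> int)
    (u v : 'I_m -> 'rV[int]_d) (w : 'I_m -> 'rV[int]_l) (dj : 'I_m -> int)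
    (e : 'I_m -> int) (rel : 'I_m -> bool)
    (p : (2 * n).-tuple (option int)) (c : 'rV[int]_l)
    (a : nat -> 'rV[int]_d) : Prop :=
  injective a /\
  (forall k ell : nat, (k < ell)%N -> forall j : 'I_m,
     approx (rel j) (e j) (dotv (u j) (a k))
            (dotv (v j) (a ell) + dotv (w j) c + dj j)) /\
  (forall i : 'I_n,
     sup_le (fun k => dotv (r i) (a k)) (p_odd p i) /\
     le_liminf (p_even p i) (fun k => dotv (s i) (a k) + dotv (t i) c + h i)).

From HB Require Import structures.
From mathcomp Require Import all_boot all_order all_algebra.
From mathcomp Require Import zify ring.
From Stdlib Require Import Classical ClassicalEpsilon.
Import Order.TTheory GRing.Theory Num.Theory.
Local Open Scope ring_scope.

(* An arithmetic progression a0 + k a is compatible exactly when (a0, a) satisfies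
   (1)-(4).  Conversely, given a compatible sequence, drop an initial segment so that
   the finite liminf bounds hold everywhere, and pass to a subsequence (b_k) along
   which finitely many integer sequences bounded below become nondecreasing:
   -r_i.b_k for finite p_{2i-1}, s_i.b_k, and plus and minus the residues of u_j.b_k
   and v_j.b_k modulo e_j, which are therefore constant.  Then a0 := b_0 and
   a := b_J - b_0 satisfy (1), (2) and (4) for every J > 0, and (3) for J large. *)

Lemma dotvD k (x y z : 'rV[int]_k) : dotv x (y + z) = dotv x y + dotv x z.
Proof. by rewrite /dotv -big_split; apply: eq_bigr => q _; rewrite !mxE mulrDr. Qed.

Lemma dotvB k (x y z : 'rV[int]_k) : dotv x (y - z) = dotv x y - dotv x z.
Proof. by rewrite /dotv -sumrB; apply: eq_bigr => q _; rewrite !mxE mulrBr. Qed.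

Lemma dotvMn k (x y : 'rV[int]_k) (N : nat) : dotv x (y *+ N) = dotv x y *+ N.
Proof. by rewrite /dotv -sumrMnl; apply: eq_bigr => q _; rewrite mulmxnE mulrnAr. Qed.

Lemma approx_dvd_shift {b e x y x' y'} :
  approx b e x' y' -> (e %| x - x')%Z -> (e %| y - y')%Z -> approx b e x y.
Proof.
move=> + dx dy; rewrite /approx /congr_e.
have -> : x - y = (x - x' - (y - y')) + (x' - y') by ring.
by rewrite (rpredDl _ (rpredB dx dy)).
Qed.

Lemma incr_geq_id {phi : nat -> nat} :
  {homo phi : i j / (i < j)%N} -> forall i, (i <= phi i)%N.
Proof.
by move=> phi_incr; elim=> // i IHi; exact: leq_ltn_trans IHi (phi_incr _ _ (ltnSn i)).
Qed.

Lemma incr_inj {phi : nat -> nat} : {homo phi : i j / (i < j)%N} -> injective phi.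
Proof.
move=> phi_incr i j eq_phi; apply/eqP.
by case: ltngtP => // /phi_incr; rewrite eq_phi ltnn.
Qed.

Lemma eventually_fin (I : finType) (P : I -> nat -> Prop) :
  (forall x, exists N, forall k, (N <= k)%N -> P x k) ->
  exists N, forall x k, (N <= k)%N -> P x k.
Proof.
move=> /fin_all_exists [N HN]; exists (\max_x N x)%N => x k le_k.
by apply: HN; exact: leq_trans (leq_bigmax x) le_k.
Qed.

Lemma tail_argmin (g : nat -> int) (B : int) : (forall k, B <= g k) ->
  forall k, exists j, (k <= j)%N /\ forall j', (k <= j')%N -> g j <= g j'.
Proof.
move=> gB k; apply: NNPP => no_min.
suff: forall N j, (k <= j)%N -> `|g j - B|%N = N -> False by move/(_ _ k (leqnn k) erefl).
elim/ltn_ind => N IH j le_kj eq_N; apply: no_min; exists j; split=> // j' le_kj'.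
apply: NNPP => /negP; rewrite -ltNge => lt_j'j.
by apply: (IH _ _ j' le_kj' erefl); have := gB j; have := gB j'; lia.
Qed.

Lemma nondecreasing_subseq (g : nat -> int) (B : int) : (forall k, B <= g k) ->
  exists2 phi : nat -> nat, {homo phi : i j / (i < j)%N} &
    {homo g \o phi : i j / (i <= j)%N >-> i <= j}.
Proof.
move=> gB; have /all_sig[next next_min] :=
  fun k => constructive_indefinite_description _ (@tail_argmin g B gB k).
pose phi i := iter i (fun j => next j.+1) (next 0%N).
have phiS i : phi i.+1 = next (phi i).+1 by [].
have phi_lt i : (phi i < phi i.+1)%N by rewrite phiS; case: (next_min (phi i).+1).
exists phi; first by apply: homo_ltn phi_lt => ? ? ?; apply: ltn_trans.
apply: homo_leq => [//|? ? ?|i]; first exact: le_trans.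
have [k [le_k_phi min_k]] : exists k, (k <= phi i)%N /\
    forall j, (k <= j)%N -> g (phi i) <= g j.
  by case: i => [|i]; [exists 0%N | exists (phi i).+1]; exact: next_min.
by apply: min_k; exact: leq_trans le_k_phi (ltnW (phi_lt i)).
Qed.

Lemma nondecreasing_common_subseq {I : eqType} {G : I -> nat -> int} {xs : seq I} :
  (forall x, x \in xs -> exists B, forall k, B <= G x k) ->
  exists2 phi : nat -> nat, {homo phi : i j / (i < j)%N} &
    forall x, x \in xs -> {homo G x \o phi : i j / (i <= j)%N >-> i <= j}.
Proof.
elim: xs => [|x xs IH] bounded; first by exists id.
have [|phi phi_incr phi_mono] := IH; first by move=> y y_xs; apply: bounded; rewrite inE y_xs orbT.
have [B GxB] := bounded x (mem_head _ _).
have [psi psi_incr psi_mono] := @nondecreasing_subseq (G x \o phi) B (fun k => GxB _).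
exists (phi \o psi) => [i j lt_ij|y]; first exact/phi_incr/psi_incr.
rewrite inE => /predU1P[-> //| y_xs] i j le_ij.
by apply: phi_mono y_xs _ _ (ltnW_homo psi_incr le_ij).
Qed.

Lemma progression_inj (R : numDomainType) k (a0 a : 'rV[R]_k) :
  a != 0 -> injective (fun N => a0 + a *+ N).
Proof.
move=> a_nz N N' /addrI eq_aN; have /existsP[q a_q_nz] : [exists q, a 0 q != 0].
  apply: contraNT a_nz => /existsPn a_0; apply/eqP/rowP => q; rewrite mxE.
  exact/eqP/negbNE/a_0.
by apply: (mulrIn a_q_nz); move/rowP/(_ q): eq_aN; rewrite !mulmxnE.
Qed.

Section Compatibility.
Context {d l n m : nat}.
Context {r s : 'I_n -> 'rV[int]_d} {t : 'I_n -> 'rV[int]_l} {h : 'I_n -> int}.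
Context {u v : 'I_m -> 'rV[int]_d} {w : 'I_m -> 'rV[int]_l} {dj : 'I_m -> int}.
Context {e : 'I_m -> int} {rel : 'I_m -> bool}.
Context {c : 'rV[int]_l} {p : (2 * n).-tuple (option int)}.

Local Notation compat := (compatible r s t h u v w dj e rel p c).

Definition progression_witness (a0 a : 'rV[int]_d) : Prop :=
  a != 0 /\
  (forall i z, p_odd p i = Some z -> dotv (r i) a0 <= z /\ dotv (r i) a <= 0) /\
  (forall i z, p_even p i = Some z ->
     z <= dotv (s i) a0 + dotv (t i) c + h i /\ 0 <= dotv (s i) a) /\
  (forall i, p_even p i = None -> 0 < dotv (s i) a) /\
  (forall j,
     approx (rel j) (e j) (dotv (u j) a0) (dotv (v j) (a0 + a) + dotv (w j) c + dj j) /\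
     congr_e (e j) (dotv (u j) a) 0 /\ congr_e (e j) (dotv (v j) a) 0).

Lemma compatible_progression (a0 a : 'rV[int]_d) :
  progression_witness a0 a -> compat (fun k => a0 + a *+ k).
Proof.
move=> [a_nz [odd_ok [even_ok [omega_ok cong_ok]]]].
split; [exact: progression_inj | split => [k k' _ j | i]].
  have [approx_j [u_a v_a]] := cong_ok j; move: u_a v_a; rewrite /congr_e !subr0.
  have shift X N : (e j %| dotv X a)%Z -> (e j %| dotv X (a0 + a *+ N) - dotv X a0)%Z.
    by rewrite dotvD dotvMn addrAC subrr add0r => /rpredMn.
  move=> /shift u_shift /shift v_shift; apply: (approx_dvd_shift approx_j (u_shift k)).
  have -> : dotv (v j) (a0 + a *+ k') + dotv (w j) c + dj j -
      (dotv (v j) (a0 + a) + dotv (w j) c + dj j) =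
      (dotv (v j) (a0 + a *+ k') - dotv (v j) a0) - (dotv (v j) (a0 + a *+ 1) - dotv (v j) a0).
    by ring.
  exact: rpredB.
split.
  case: (p_odd p i) (odd_ok i) => [z /(_ z erefl) [r_a0 r_a] k|//] /=.
  by rewrite dotvD dotvMn; lia.
case: (p_even p i) (even_ok i) (omega_ok i) => /= [z /(_ z erefl) [s_a0 s_a] _ |].
  by exists 0%N => k _; rewrite dotvD dotvMn; lia.
move=> _ /(_ erefl) s_a M.
exists (absz (M - (dotv (s i) a0 + dotv (t i) c + h i))%R) => k le_k.
by rewrite dotvD dotvMn; nia.
Qed.

Lemma compatible_reindex {a : nat -> 'rV[int]_d} {phi : nat -> nat} :
  {homo phi : i j / (i < j)%N} -> compat a -> compat (a \o phi).
Proof.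
move=> phi_incr [a_inj [a_approx a_bounds]].
split; [exact: inj_comp a_inj (incr_inj phi_incr) | split => [k k' /phi_incr|i]].
  exact: a_approx.
have [sup_ok liminf_ok] := a_bounds i; split=> [|/=].
  by case: (p_odd p i) sup_ok => //= z + k; apply.
have later k : (k <= phi k)%N := incr_geq_id phi_incr k.
case: (p_even p i) liminf_ok => [z [N lbN] | lbM M]; last have [N lbN] := lbM M.
all: by exists N => k le_k; apply: lbN; exact: leq_trans le_k (later k).
Qed.

Lemma compatible_eventual_lower_bound {a : nat -> 'rV[int]_d} : compat a ->
  exists N, forall i k, (N <= k)%N ->
    odflt 0 (p_even p i) <= dotv (s i) (a k) + dotv (t i) c + h i.
Proof.
move=> [_ [_ a_bounds]]; apply: eventually_fin => i.
by case: (p_even p i) (a_bounds i).2 => [z //| /(_ 0)].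
Qed.

Definition anchored (b : nat -> 'rV[int]_d) : Prop :=
  [/\ forall i z, p_even p i = Some z -> z <= dotv (s i) (b 0%N) + dotv (t i) c + h i,
      forall i z k, p_odd p i = Some z -> dotv (r i) (b k) <= dotv (r i) (b 0%N),
      forall i k, dotv (s i) (b 0%N) <= dotv (s i) (b k) &
      forall j k, (dotv (u j) (b k) = dotv (u j) (b 0%N) %[mod e j])%Z /\
                  (dotv (v j) (b k) = dotv (v j) (b 0%N) %[mod e j])%Z].

Lemma compatible_anchored {a : nat -> 'rV[int]_d} : (forall j, 0 < e j) ->
  compat a -> exists2 b, compat b & anchored b.
Proof.
move=> e_pos a_compat; have [N lbN] := compatible_eventual_lower_bound a_compat.
pose b1 k := a (k + N)%N.
have b1_compat : compat b1.
  by apply: compatible_reindex a_compat => i j; rewrite ltn_add2r.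
pose G (x : 'I_n + 'I_n + 'I_m * bool * bool) k : int := match x with
  | inl (inl i) => if p_odd p i is Some _ then - dotv (r i) (b1 k) else 0
  | inl (inr i) => dotv (s i) (b1 k)
  | inr (j, uv, neg) =>
      let res := (dotv (if uv then v j else u j) (b1 k) %% e j)%Z in
      if neg then - res else res
  end.
have G_bounded x : exists B, forall k, B <= G x k.
  case: x => [[i|i]|[[j uv] neg]] /=.
  - case: (p_odd p i) (b1_compat.2.2 i).1 => [z /= r_le|_]; last by exists 0.
    by exists (- z) => k; have := r_le k; lia.
  - exists (odflt 0 (p_even p i) - dotv (t i) c - h i) => k.
    by have := lbN i (k + N)%N (leq_addl _ _); rewrite /b1; lia.
  - exists (- e j) => k; set y := dotv _ _.
    have := modz_ge0 y (lt0r_neq0 (e_pos j)); have := ltz_pmod y (e_pos j).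
    by case: neg; lia.
have [phi phi_incr G_mono] :=
  nondecreasing_common_subseq (xs := enum {: 'I_n + 'I_n + 'I_m * bool * bool})
    (fun x _ => G_bounded x).
have G_0 x k : G x (phi 0%N) <= G x (phi k).
  exact: G_mono x (mem_enum _ x) 0%N k (leq0n k).
exists (b1 \o phi); first exact: compatible_reindex.
split=> [i z even_i|i z k odd_i|i k|j k].
- by have := lbN i (phi 0%N + N)%N (leq_addl _ _); rewrite even_i.
- by have := G_0 (inl (inl i)) k; rewrite /= odd_i; lia.
- exact: G_0 (inl (inr i)) k.
- have res_eq uv : (dotv (if uv then v j else u j) (b1 (phi k)) %% e j)%Z =
      (dotv (if uv then v j else u j) (b1 (phi 0%N)) %% e j)%Z.
    have := G_0 (inr (j, uv, false)) k; have := G_0 (inr (j, uv, true)) k.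
    by rewrite /=; lia.
  exact: conj (res_eq false) (res_eq true).
Qed.

Lemma anchored_progression_witness {b : nat -> 'rV[int]_d} :
  compat b -> anchored b -> exists a0 a, progression_witness a0 a.
Proof.
move=> [b_inj [b_approx b_bounds]] [lb0 r_mono s_mono res_const].
have [J omega_grows] : exists J, forall i k, (J <= k)%N ->
    p_even p i = None -> dotv (s i) (b 0%N) < dotv (s i) (b k).
  apply: eventually_fin => i.
  case: (p_even p i) (b_bounds i).2 => [z _|]; first by exists 0%N.
  move=> /(_ (dotv (s i) (b 0%N) + dotv (t i) c + h i + 1)) [N lbN].
  by exists N => k /lbN; lia.
have b_J : b 0%N + (b J.+1 - b 0%N) = b J.+1 by rewrite addrC subrK.
exists (b 0%N), (b J.+1 - b 0%N); split; first by rewrite subr_eq0; apply/eqP => /b_inj.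
split=> [i z odd_i|]; first split.
- by have := (b_bounds i).1; rewrite odd_i; apply.
- by rewrite dotvB; have := r_mono i z J.+1 odd_i; lia.
split=> [i z even_i|].
  by rewrite dotvB; have := s_mono i J.+1; split; [exact: lb0 | lia].
split=> [i omega_i|j].
  by rewrite dotvB; have := omega_grows i J.+1 (leqnSn J) omega_i; lia.
rewrite b_J /congr_e !subr0 !dotvB -!eqz_mod_dvd.
have [-> ->] := res_const j J.+1.
by split; [exact: b_approx | rewrite !eqxx].
Qed.

End Compatibility.

Theorem mainTheorem9 (d l n m : nat)
    (r s : 'I_n -> 'rV[int]_d) (t : 'I_n -> 'rV[int]_l) (h : 'I_n -> int)
    (u v : 'I_m -> 'rV[int]_d) (w : 'I_m -> 'rV[int]_l) (dj : 'I_m -> int)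
    (e : 'I_m -> int) (rel : 'I_m -> bool)
    (he : forall j, 0 < e j)
    (c : 'rV[int]_l) (p : (2 * n).-tuple (option int)) :
  (exists a : nat -> 'rV[int]_d, compatible r s t h u v w dj e rel p c a) <->
  (exists a0 a : 'rV[int]_d, a != 0 /\
     (forall i : 'I_n, forall z, p_odd p i = Some z ->
        dotv (r i) a0 <= z /\ dotv (r i) a <= 0) /\
     (forall i : 'I_n, forall z, p_even p i = Some z ->
        z <= dotv (s i) a0 + dotv (t i) c + h i /\ 0 <= dotv (s i) a) /\
     (forall i : 'I_n, p_even p i = None -> 0 < dotv (s i) a) /\
     (forall j : 'I_m,
        approx (rel j) (e j) (dotv (u j) a0)
               (dotv (v j) (a0 + a) + dotv (w j) c + dj j) /\
        congr_e (e j) (dotv (u j) a) 0 /\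
        congr_e (e j) (dotv (v j) a) 0)).
Proof.
split=> [[a a_compat] | [a0 [a witness]]].
  have [b b_compat b_anchored] := compatible_anchored he a_compat.
  exact: anchored_progression_witness b_compat b_anchored.
by exists (fun k => a0 + a *+ k); exact: compatible_progression.
Qed.
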